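(* Let $\mathrm{st}(x_1,\dots,x_n)$ be the monoid of $K$-algebra endomorphisms $g$ of $\mathbb{S}_n$ with $g(x_i)=x_i$ for all $i$. Then $\mathrm{st}(x_1,\dots,x_n)$ is an abelian monoid, each non-identity element of it is an injective endomorphism of $\mathbb{S}_n$ that is not an automorphism, and it consists precisely of the endomorphisms $\sigma_p$ given by $\sigma_p(x_i)=x_i$, $\sigma_p(y_i)=y_i+p_i(1-x_iy_i)$ ($i=1,\dots,n$), where $p=(p_1,\dots,p_n)\in K[x_1,\dots,x_n]^n$ ranges over the $n$-tuples satisfying, for every pair $i\ne j$, $$-x_j^{-1}(p_i-p_{i,j})+x_i^{-1}(p_j-p_{j,i})+p_ip_{j,i}-p_jp_{i,j}=0,\qquad p_{i,j}:=p_i|_{x_j=0}$$ (here $x_j^{-1}(p_i-p_{i,j})$ denotes the polynomial quotient).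
   Context: $K$ is a field of characteristic zero. $\mathbb{S}_n$ is the $K$-algebra generated by $x_1,\dots,x_n,y_1,\dots,y_n$ with defining relations $y_ix_i=1$ and $[x_i,y_j]=[x_i,x_j]=[y_i,y_j]=0$ for $i\ne j$; $K[x_1,\dots,x_n]$ is the subalgebra generated by the $x_i$ (a polynomial algebra). *)

From HB Require Import structures.
From mathcomp Require Import all_boot all_order all_algebra.
Set Implicit Arguments. Unset Strict Implicit. Unset Printing Implicit Defensive.
Import Order.TTheory GRing.Theory Num.Theory.
Local Open Scope ring_scope.

(* Polynomial ring K[x_0,...,x_{n-1}] as iterated univariate polynomials:
   mpoly K (m+1) = (mpoly K m)[x_m]. *)
Fixpoint mpoly (K : comNzRingType) (n : nat) : comNzRingType :=
  match n with
  | 0 => K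
  | m.+1 => {poly (mpoly K m)}
  end.

Fixpoint mvar (K : comNzRingType) (n : nat) (i : nat) : mpoly K n :=
  match n return mpoly K n with
  | 0 => 0
  | m.+1 => if i == m then 'X else (@mvar K m i)%:P
  end.

Fixpoint msubst0 (K : comNzRingType) (n : nat) (j : nat) : mpoly K n -> mpoly K n :=
  match n return mpoly K n -> mpoly K n with
  | 0 => fun c => c
  | m.+1 => fun p : {poly mpoly K m} =>
      if j == m then (p`_0)%:P else map_poly (@msubst0 K m j) p
  end.

(* polynomial quotient by x_j (drops the monomials not divisible by x_j,
   and divides the others by x_j) *)
Fixpoint mdivX (K : comNzRingType) (n : nat) (j : nat) : mpoly K n -> mpoly K n :=
  match n return mpoly K n -> mpoly K n with
  | 0 => fun c => c
  | m.+1 => fun p : {poly mpoly K m} =>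
      if j == m then drop_poly 1 p else map_poly (@mdivX K m j) p
  end.

Fixpoint meval (K : comNzRingType) (A : lalgType K) (f : nat -> A) (n : nat)
  : mpoly K n -> A :=
  match n return mpoly K n -> A with
  | 0 => fun c => c%:A
  | m.+1 => fun p : {poly mpoly K m} =>
      \sum_(k < size p) meval f (p`_k) * f m ^+ k
  end.

Definition ext (A : nzRingType) (n : nat) (x : 'I_n -> A) : nat -> A :=
  fun k => oapp x 0 (insub k).

Definition is_alg_hom (K : nzRingType) (A B : algType K) (f : A -> B) : Prop :=
  [/\ {morph f : u v / u + v}, {morph f : u v / u * v}, f 1 = 1
    & forall (a : K) (u : A), f (a *: u) = a *: f u].

Definition jacobson_rel (A : nzRingType) (n : nat) (x y : 'I_n -> A) : Prop :=
  (forall i, y i * x i = 1) /\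
  (forall i j, i != j ->
     [/\ x i * y j = y j * x i, x i * x j = x j * x i & y i * y j = y j * y i]).

(* (A, x, y) is the K-algebra S_n presented by generators x_i, y_i and the
   relations above: universal property of the presentation. *)
Definition is_Sn (K : nzRingType) (A : algType K) (n : nat) (x y : 'I_n -> A) : Prop :=
  jacobson_rel x y /\
  forall (B : algType K) (xb yb : 'I_n -> B), jacobson_rel xb yb ->
    (exists f : A -> B, is_alg_hom f /\ forall i, f (x i) = xb i /\ f (y i) = yb i) /\
    (forall f g : A -> B, is_alg_hom f -> is_alg_hom g ->
       (forall i, f (x i) = g (x i) /\ f (y i) = g (y i)) -> forall a, f a = g a).

Definition admissible (K : comNzRingType) (n : nat) (p : 'I_n -> mpoly K n) : Prop :=
  forall i j : 'I_n, i != j ->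
    - mdivX j (p i - msubst0 j (p i)) + mdivX i (p j - msubst0 i (p j))
    + p i * msubst0 i (p j) - p j * msubst0 j (p i) = 0.

From HB Require Import structures.
From mathcomp Require Import all_boot all_order all_algebra.
From mathcomp Require Import boolp ring.
Set Implicit Arguments. Unset Strict Implicit. Unset Printing Implicit Defensive.
Import Order.TTheory GRing.Theory Num.Theory.
Local Open Scope ring_scope.

(* S_n acts on K[x] = K[x_1, ..., x_n]: x_i by multiplication and y_i by the
   quotient by x_i.  Every element of S_n is a sum of terms a(x) y^s, and
   y^s lowers exponents of monomials, so this representation rho is faithful.
   In S_n, e_i = 1 - x_i y_i is an idempotent acting as the substitution
   x_i := 0.  Faithfulness shows that an element killed by x_i on the right
   and commuting with the other x_j is of the form p(x) e_i; applied to
   g(y_i) - y_i for g fixing the x_j, this gives g(y_i) = y_i + p_i e_i.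
   The commutator of two such perturbed generators is Q_ij(p) e_i e_j, with
   Q_ij the admissibility expression: hence the p_i of g are admissible, and
   conversely admissible p define endomorphisms by the universal property.
   Composition is y_i + q e_i |-> y_i + (p_i + q - x_i p_i q) e_i, which is
   symmetric in p and q (commutativity) and, K[x] being a domain, can only be
   inverted when p = 0 (non-surjectivity).  Injectivity uses E = prod e_i,
   which acts on K[x] as "constant term": a kernel element c gives
   rho(c)(v) * g(E) = 0, while g(E) still has constant term 1. *)

(* Coefficientwise images of polynomials under a map that is only known to be
   additive (resp. multiplicative); the operations on K[x_0,...,x_{n-1}] below
   are defined by recursion on n, so they cannot carry morphism structures. *)
Section MapPolyMorph.
Variables (R S : nzRingType) (f : R -> S).
Hypotheses (f0 : f 0 = 0) (fD : {morph f : a b / a + b}).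

Lemma map_poly_add (p q : {poly R}) :
  map_poly f (p + q) = map_poly f p + map_poly f q.
Proof. by apply/polyP=> k; rewrite coefD !coef_map_id0 // coefD fD. Qed.

Lemma map_poly_const (c : R) : map_poly f c%:P = (f c)%:P.
Proof. by apply/polyP=> k; rewrite coef_map_id0 // !coefC; case: (k == 0)%N. Qed.

Hypothesis fM : {morph f : a b / a * b}.

Lemma map_poly_mul (p q : {poly R}) :
  map_poly f (p * q) = map_poly f p * map_poly f q.
Proof.
apply/polyP=> k; rewrite coef_map_id0 // !coefM (big_morph f fD f0).
by apply: eq_bigr => i _; rewrite fM !coef_map_id0.
Qed.

End MapPolyMorph.

Section MultivariateToolkit.
Variable K : comNzRingType.

Fixpoint mconst (n : nat) (c : K) : mpoly K n :=
  match n return mpoly K n with 0 => c | m.+1 => (mconst m c)%:P end.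

Lemma mconstD n a b : mconst n (a + b) = mconst n a + mconst n b.
Proof. by elim: n => //= m IH; rewrite IH polyCD. Qed.

Lemma mconstM n a b : mconst n (a * b) = mconst n a * mconst n b.
Proof. by elim: n => //= m IH; rewrite IH polyCM. Qed.

Lemma mconst1 n : mconst n 1 = 1.
Proof. by elim: n => //= m IH; rewrite IH. Qed.

Lemma mconst0 n : mconst n 0 = 0.
Proof. by elim: n => //= m IH; rewrite IH. Qed.

Lemma msubst0_0 n j : msubst0 j (0 : mpoly K n) = 0.
Proof.
elim: n => //= m IH; case: ifP => _; first by rewrite coef0.
by apply/polyP=> k; rewrite coef_map_id0 // !coef0 IH.
Qed.

Lemma msubst0D n j (u v : mpoly K n) :
  msubst0 j (u + v) = msubst0 j u + msubst0 j v.
Proof.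
elim: n u v => //= m IH u v; case: ifP => _; first by rewrite coefD polyCD.
exact/map_poly_add/IH/msubst0_0.
Qed.

Lemma msubst0M n j (u v : mpoly K n) :
  msubst0 j (u * v) = msubst0 j u * msubst0 j v.
Proof.
elim: n u v => //= m IH u v; case: ifP => _; first by rewrite coef0M polyCM.
exact/map_poly_mul/IH/msubst0D/msubst0_0.
Qed.

Lemma msubst0_const n j c : msubst0 j (mconst n c) = mconst n c.
Proof.
elim: n => //= m IH; case: ifP => _; first by rewrite coefC.
by rewrite map_poly_const ?IH //; apply: msubst0_0.
Qed.

Lemma msubst0_1 n j : msubst0 j (1 : mpoly K n) = 1.
Proof. by rewrite -(mconst1 n) msubst0_const. Qed.

Lemma msubst0X n j (u : mpoly K n) k : msubst0 j (u ^+ k) = msubst0 j u ^+ k.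
Proof. by elim: k => [|k IH]; rewrite ?expr0 ?msubst0_1 // !exprS msubst0M IH. Qed.

Lemma msubst0_var_neq n i j : i != j -> msubst0 j (mvar K n i) = mvar K n i.
Proof.
move=> ne; elim: n => //= m IH; case: (eqVneq j m) => [ejm|nm].
  case: ifP => [/eqP ei|_]; first by rewrite ei -ejm eqxx in ne.
  by rewrite coefC.
case: ifP => [/eqP im|_]; last by rewrite map_poly_const ?IH //; apply: msubst0_0.
apply/polyP=> k; rewrite coef_map_id0; last by apply: msubst0_0.
by rewrite !coefX; case: (k == 1)%N; rewrite ?msubst0_1 ?msubst0_0.
Qed.

Lemma mdivX0 n j : mdivX j (0 : mpoly K n) = 0.
Proof.
elim: n => //= m IH; case: ifP => _; first exact: drop_poly0r.
by apply/polyP=> k; rewrite coef_map_id0 // !coef0 IH.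
Qed.

Lemma mdivXD n j (u v : mpoly K n) : mdivX j (u + v) = mdivX j u + mdivX j v.
Proof.
elim: n u v => //= m IH u v; case: ifP => _; first exact: drop_polyD.
exact/map_poly_add/IH/mdivX0.
Qed.

Lemma mdivXB n j (u v : mpoly K n) : mdivX j (u - v) = mdivX j u - mdivX j v.
Proof.
have mdivXN : mdivX j (- v) = - mdivX j v.
  by apply/eqP; rewrite -subr_eq0 opprK -mdivXD addNr mdivX0.
by rewrite mdivXD mdivXN.
Qed.

Lemma mdivX_var_eq n i (u : mpoly K n) : (i < n)%N -> mdivX i (mvar K n i * u) = u.
Proof.
elim: n u => //= m IH u; rewrite ltnS leq_eqVlt => /orP[/eqP ->|lt].
  by rewrite eqxx mulrC -['X]expr1 drop_polyMXn_id.
rewrite (ltn_eqF lt); apply/polyP=> k; rewrite coef_map_id0; last exact: mdivX0.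
by rewrite coefCM IH.
Qed.

Lemma mdivX_var_neq n i j (u : mpoly K n) : i != j ->
  mdivX j (mvar K n i * u) = mvar K n i * mdivX j u.
Proof.
move=> ne; elim: n u => //= m IH u; case: (eqVneq j m) => [ejm|nm].
  have -> : (i == m) = false by apply/negbTE; rewrite -ejm.
  by apply/polyP=> k; rewrite coef_drop_poly !coefCM coef_drop_poly.
apply/polyP=> k; rewrite coef_map_id0; last exact: mdivX0.
case: ifP => _; last by rewrite !coefCM IH coef_map_id0 //; exact: mdivX0.
rewrite !coefXM; case: (k == 0)%N; first by rewrite mdivX0.
by rewrite coef_map_id0 //; exact: mdivX0.
Qed.

Lemma mdivX_const n j c (u : mpoly K n) :
  mdivX j (mconst n c * u) = mconst n c * mdivX j u.
Proof.
elim: n u => //= m IH u; case: ifP => _.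
  by apply/polyP=> k; rewrite coef_drop_poly !coefCM coef_drop_poly.
apply/polyP=> k; rewrite coef_map_id0; last exact: mdivX0.
by rewrite !coefCM IH coef_map_id0 //; exact: mdivX0.
Qed.

Lemma mdivX_msubst0 n j (u : mpoly K n) : (j < n)%N -> mdivX j (msubst0 j u) = 0.
Proof.
elim: n u => //= m IH u; rewrite ltnS leq_eqVlt => /orP[/eqP ->|lt].
  by rewrite eqxx drop_poly_eq0 // size_polyC_leq1.
rewrite (ltn_eqF lt); apply/polyP=> k; rewrite coef_map_id0; last exact: mdivX0.
by rewrite coef_map_id0 ?IH ?coef0 //; exact: msubst0_0.
Qed.

Lemma mpoly_split n j (u : mpoly K n) : msubst0 j u + mvar K n j * mdivX j u = u.
Proof.
elim: n u => //= [u|m IH u]; first by rewrite mul0r addr0.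
case: ifP => _.
  apply/polyP=> k; rewrite coefD coefC coefXM coef_drop_poly.
  by case: k => [|k]; rewrite ?addr0 ?add0r // addn1.
apply/polyP=> k; rewrite coefD coefCM !coef_map_id0 ?IH //.
  exact: mdivX0.
exact: msubst0_0.
Qed.

Lemma mdivX_comm n i j (u : mpoly K n) : mdivX i (mdivX j u) = mdivX j (mdivX i u).
Proof.
elim: n u => //= m IH u.
case: (eqVneq i m) => _; case: (eqVneq j m) => _ //;
  apply/polyP=> k; rewrite ?coef_drop_poly !coef_map_id0 ?coef_drop_poly ?IH //;
  exact: mdivX0.
Qed.

Fixpoint mcoef0 (n : nat) : mpoly K n -> K :=
  match n return mpoly K n -> K with
  | 0 => fun c => c
  | m.+1 => fun p : {poly mpoly K m} => mcoef0 (p`_0)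
  end.

Lemma mcoef0B n (u v : mpoly K n) : mcoef0 (u - v) = mcoef0 u - mcoef0 v.
Proof. by elim: n u v => //= m IH u v; rewrite coefB IH. Qed.

Lemma mcoef0_const n c : mcoef0 (mconst n c) = c.
Proof. by elim: n => //= m IH; rewrite coefC. Qed.

Lemma mcoef0_varM n i (u : mpoly K n) : (i < n)%N -> mcoef0 (mvar K n i * u) = 0.
Proof.
elim: n u => //= m IH u; rewrite ltnS leq_eqVlt => /orP[/eqP ->|lt].
  by rewrite eqxx coefXM /= -(mconst0 m) mcoef0_const.
by rewrite (ltn_eqF lt) coefCM IH.
Qed.

Lemma mcoef0_msubst0 n j (u : mpoly K n) : mcoef0 (msubst0 j u) = mcoef0 u.
Proof.
elim: n u => //= m IH u; case: ifP => _; first by rewrite coefC.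
by rewrite coef_map_id0 ?IH //; exact: msubst0_0.
Qed.

Lemma msubst0_fixed_const n (u : mpoly K n) :
  (forall j, (j < n)%N -> msubst0 j u = u) -> u = mconst n (mcoef0 u).
Proof.
elim: n u => //= m IH u fixu.
have u0 : u`_0 = mconst m (mcoef0 (u`_0)).
  apply: IH => j lt; have := fixu j (ltnW lt); rewrite /= (ltn_eqF lt) => uj.
  by rewrite -{2}uj coef_map_id0 //; exact: msubst0_0.
by have := fixu m (ltnSn m); rewrite /= eqxx -u0.
Qed.

Definition monomial n (c : 'I_n -> nat) : mpoly K n := \prod_(i < n) mvar K n i ^+ c i.

Definition decr_at n (c : 'I_n -> nat) (i : 'I_n) : 'I_n -> nat :=
  fun j => if j == i then (c j).-1 else c j.

Lemma monomial_ext n (c d : 'I_n -> nat) : c =1 d -> monomial c = monomial d.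
Proof. by move=> cd; apply: eq_bigr => i _; rewrite cd. Qed.

Lemma monomial0 n : monomial (fun _ : 'I_n => 0%N) = 1.
Proof. by rewrite /monomial big1. Qed.

Lemma mdivX_monomial n (i : 'I_n) (c : 'I_n -> nat) :
  mdivX i (monomial c) = if (0 < c i)%N then monomial (decr_at c i) else 0.
Proof.
rewrite /monomial (bigD1 i) //= (bigD1 i (P := predT)) //=.
set r := \prod_(j < n | j != i) _.
have -> : \prod_(j < n | j != i) mvar K n j ^+ decr_at c i j = r.
  by apply: eq_bigr => j ji; rewrite /decr_at (negbTE ji).
have rfix : msubst0 i r = r.
  rewrite (big_morph _ (@msubst0M n i) (msubst0_1 n i)).
  by apply: eq_bigr => j ji; rewrite msubst0X msubst0_var_neq.
rewrite /decr_at eqxx; case: (c i) => [|k] /=.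
  by rewrite expr0 mul1r -rfix mdivX_msubst0.
by rewrite exprS -mulrA mdivX_var_eq.
Qed.

End MultivariateToolkit.

Lemma poly_unit_size (R : nzRingType) (p q : {poly R}) :
  (forall a b : R, a * b = 0 -> a = 0 \/ b = 0) ->
  p * q = 1 -> size p = 1%N /\ size q = 1%N.
Proof.
move=> dom pq.
have p0 : p != 0 by apply: contra_eq_neq pq => ->; rewrite mul0r eq_sym oner_neq0.
have q0 : q != 0 by apply: contra_eq_neq pq => ->; rewrite mulr0 eq_sym oner_neq0.
have hl : lead_coef p * lead_coef q != 0.
  by apply/eqP=> /dom [] /eqP; rewrite lead_coef_eq0; apply/negP.
have := size_proper_mul hl; rewrite pq size_poly1.
rewrite -(prednK (_ : 0 < size p)%N) ?size_poly_gt0 //.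
rewrite -(prednK (_ : 0 < size q)%N) ?size_poly_gt0 // addnS succnK.
by move/esym/eqP; rewrite addSn eqSS addn_eq0 => /andP[/eqP-> /eqP->].
Qed.

Section MultivariateDomain.
Variable K : idomainType.

Lemma mpoly_mul_eq0 n (u v : mpoly K n) : u * v = 0 -> u = 0 \/ v = 0.
Proof.
elim: n u v => [|m IH] u v /=.
  by move/eqP; rewrite mulf_eq0 => /orP[/eqP->|/eqP->]; [left|right].
case: (eqVneq u 0) => [->|u0]; first by left.
case: (eqVneq v 0) => [->|v0]; first by right.
move=> uv; exfalso.
have hl : lead_coef u * lead_coef v != 0.
  by apply/eqP=> /IH [] /eqP; rewrite lead_coef_eq0; apply/negP.
have := size_proper_mul hl; rewrite uv size_poly0.
rewrite -(prednK (_ : 0 < size u)%N) ?size_poly_gt0 //.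
by rewrite -(prednK (_ : 0 < size v)%N) ?size_poly_gt0 // addnS.
Qed.

Lemma mpoly_unit_1subX n i (a b : mpoly K n) :
  (1 - mvar K n i * a) * (1 - mvar K n i * b) = 1 -> mvar K n i * a = 0.
Proof.
elim: n a b => [|m IH] a b /=; first by rewrite mul0r.
move=> ab1; have [su _] := poly_unit_size (@mpoly_mul_eq0 m) ab1.
have hk : forall k, (1 - (if i == m then 'X else (mvar K m i)%:P) * a)`_k.+1 = 0.
  by move=> k; rewrite nth_default // su.
case: ifP hk ab1 => _ hk ab1.
  suff -> : a = 0 by rewrite mulr0.
  apply/polyP=> k; have := hk k.
  by rewrite coefB coefC coefXM /= sub0r coef0 => /eqP; rewrite oppr_eq0 => /eqP.
apply/polyP=> k; rewrite coefCM coef0.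
case: k => [|k]; last first.
  by have := hk k; rewrite coefB coefC coefCM /= sub0r => /eqP; rewrite oppr_eq0 => /eqP.
apply: (IH _ (b`_0)).
have := congr1 (fun p : {poly mpoly K m} => p`_0) ab1; rewrite /= coef0M coefC /=.
by rewrite !coefB !coefC !coefCM.
Qed.

End MultivariateDomain.

Section Evaluation.
Variables (K : comNzRingType) (A : algType K).
Implicit Types f g : nat -> A.

Lemma meval0 f n : meval f (0 : mpoly K n) = 0.
Proof. by case: n => [|m] /=; [rewrite scale0r|rewrite size_poly0 big_ord0]. Qed.

Lemma meval_wide f m (p : mpoly K m.+1) N : (size p <= N)%N ->
  meval f p = \sum_(k < N) meval f p`_k * f m ^+ k.
Proof.
move=> le /=; rewrite (big_ord_widen N (fun k => meval f p`_k * f m ^+ k)) //.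
rewrite big_mkcond /=; apply: eq_bigr => k _; case: ifP => // /negbT.
by rewrite -leqNgt => /(nth_default 0) ->; rewrite meval0 mul0r.
Qed.

Lemma mevalD f n (u v : mpoly K n) : meval f (u + v) = meval f u + meval f v.
Proof.
elim: n u v => [|m IH] u v; first by rewrite /= scalerDl.
set N := maxn (size u) (size v).
rewrite !(@meval_wide _ _ _ N) ?leq_maxl ?leq_maxr ?(leq_trans (size_polyD _ _)) //.
by rewrite -big_split; apply: eq_bigr => k _; rewrite coefD IH mulrDl.
Qed.

Lemma mevalB f n (u v : mpoly K n) : meval f (u - v) = meval f u - meval f v.
Proof.
have mevalN : meval f (- v) = - meval f v.
  by apply/eqP; rewrite -subr_eq0 opprK -mevalD addNr meval0.
by rewrite mevalD mevalN.
Qed.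

Lemma meval_const f n c : meval f (mconst n c) = c%:A.
Proof.
elim: n => [//|m IH]; rewrite (@meval_wide _ _ _ 1) /= ?size_polyC_leq1 //.
by rewrite big_ord1 coefC /= IH expr0 mulr1.
Qed.

Lemma meval1 f n : meval f (1 : mpoly K n) = 1.
Proof. by rewrite -(mconst1 K n) meval_const scale1r. Qed.

Lemma meval_var f n i : (i < n)%N -> meval f (mvar K n i) = f i.
Proof.
elim: n => [//|m IH]; rewrite ltnS leq_eqVlt => /orP[/eqP ->|lt]; simpl mvar.
  rewrite eqxx (@meval_wide _ _ _ 2) ?size_polyX //.
  rewrite !big_ord_recl big_ord0 !coefX /= meval0 meval1.
  by rewrite mul0r add0r expr1 mul1r addr0.
rewrite (ltn_eqF lt) (@meval_wide _ _ _ 1) ?size_polyC_leq1 //.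
by rewrite big_ord1 coefC /= IH // expr0 mulr1.
Qed.

Lemma meval_ext f g n (p : mpoly K n) : (forall k, (k < n)%N -> f k = g k) ->
  meval f p = meval g p.
Proof.
elim: n p => [//|m IH] p fg /=; apply: eq_bigr => k _.
by rewrite (IH _ (fun k lt => fg k (ltnW lt))) fg.
Qed.

Lemma meval_comm f n (z : A) (p : mpoly K n) :
  (forall k, (k < n)%N -> z * f k = f k * z) -> z * meval f p = meval f p * z.
Proof.
elim: n p => [|m IH] p zf /=; first by rewrite -scalerAr -scalerAl mulr1 mul1r.
rewrite mulr_sumr mulr_suml; apply: eq_bigr => k _.
have hz : GRing.comm z (f m ^+ k) by apply: commrX; exact: zf.
by rewrite mulrA IH -?mulrA ?hz // => j lt; apply: zf; exact: ltnW.
Qed.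

Lemma meval_horner f m (p : mpoly K m.+1) :
  meval f p = (map_poly (@meval K A f m) p).[f m].
Proof.
rewrite (@horner_coef_wide _ (size p)) ?size_poly //=.
by apply: eq_bigr => k _; rewrite coef_map_id0 //; exact: meval0.
Qed.

Lemma mevalM f n (u v : mpoly K n) :
  (forall i j, (i < n)%N -> (j < n)%N -> f i * f j = f j * f i) ->
  meval f (u * v) = meval f u * meval f v.
Proof.
elim: n u v => [|m IH] u v fC; first by rewrite /= -scalerAl mul1r scalerA.
have fC' : forall i j, (i < m)%N -> (j < m)%N -> f i * f j = f j * f i.
  by move=> i j ? ?; apply: fC; exact: ltnW.
rewrite !meval_horner map_poly_mul ?hornerM_comm //.
- apply: comm_coef_poly => k; rewrite coef_map_id0 ?meval0 //.
  by apply/esym/meval_comm => j lt; apply: fC => //; exact: ltnW.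
- exact: meval0.
- exact: mevalD.
- by move=> a b; apply: IH.
Qed.

Lemma meval_msubst0 f n j (u : mpoly K n) :
  meval f (msubst0 j u) = meval (fun k => if k == j then 0 else f k) u.
Proof.
elim: n u => [//|m IH] u; simpl msubst0; case: (eqVneq j m) => [ejm|jm].
  rewrite [RHS](@meval_wide _ _ _ (size u).+1) // big_ord_recl expr0 mulr1.
  have mj : (m == j) = true by rewrite ejm eqxx.
  rewrite big1 ?addr0; last by move=> k _; rewrite mj expr0n /= mulr0.
  rewrite (@meval_wide _ _ _ 1) ?size_polyC_leq1 // big_ord1 coefC /= expr0 mulr1.
  by apply: meval_ext => k lt; case: eqP => // kj; move: lt; rewrite kj ejm ltnn.
rewrite (@meval_wide _ _ _ (size u)) ?size_poly //=.
apply: eq_bigr => k _; rewrite coef_map_id0 ?IH; last exact: msubst0_0.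
by rewrite eq_sym (negbTE jm).
Qed.

Lemma meval_hom (B : algType K) (phi : A -> B) f n (p : mpoly K n) :
  is_alg_hom phi -> phi (meval f p) = meval (phi \o f) p.
Proof.
move=> [phiD phiM phi1 phiZ].
have phi0 : phi 0 = 0 by apply: (addIr (phi 0)); rewrite -phiD !add0r.
have phiX a k : phi (a ^+ k) = phi a ^+ k.
  by elim: k => [|k IHk]; rewrite ?expr0 // !exprS phiM IHk.
elim: n p => [|m IH] p /=; first by rewrite phiZ phi1.
rewrite (big_morph phi phiD phi0); apply: eq_bigr => k _.
by rewrite phiM phiX IH.
Qed.

End Evaluation.

Definition MP (K : comNzRingType) (n : nat) : Type := mpoly K n.
HB.instance Definition _ (K : comNzRingType) (n : nat) :=
  GRing.ComNzRing.copy (MP K n) (mpoly K n).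

Section MPolyAlgebra.
Variables (K : comNzRingType) (n : nat).

Definition mpscale (c : K) (v : MP K n) : MP K n := (mconst n c : MP K n) * v.

Lemma mpscaleA a b v : mpscale a (mpscale b v) = mpscale (a * b) v.
Proof. by rewrite /mpscale mulrA mconstM. Qed.
Lemma mpscale1 : left_id 1 mpscale.
Proof. by move=> v; rewrite /mpscale mconst1 mul1r. Qed.
Lemma mpscaleDr : right_distributive mpscale +%R.
Proof. by move=> c u v; rewrite /mpscale mulrDr. Qed.
Lemma mpscaleDl v : {morph mpscale^~ v : a b / a + b}.
Proof. by move=> a b; rewrite /mpscale mconstD mulrDl. Qed.
HB.instance Definition _ :=
  GRing.Zmodule_isLmodule.Build K (MP K n) mpscaleA mpscale1 mpscaleDr mpscaleDl.

Lemma mpscaleAl (a : K) (u v : MP K n) : a *: (u * v) = (a *: u) * v.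
Proof. by rewrite /GRing.scale /= /mpscale mulrA. Qed.
HB.instance Definition _ := GRing.Lmodule_isLalgebra.Build K (MP K n) mpscaleAl.
Lemma mpscaleAr (a : K) (u v : MP K n) : a *: (u * v) = u * (a *: v).
Proof. by rewrite /GRing.scale /= /mpscale mulrCA. Qed.
HB.instance Definition _ := GRing.Lalgebra_isAlgebra.Build K (MP K n) mpscaleAr.

Lemma mpscaleE (c : K) (v : MP K n) : c *: v = (mconst n c : MP K n) * v.
Proof. by []. Qed.

End MPolyAlgebra.

Lemma meval_vars (K : comNzRingType) n (p : mpoly K n) :
  meval (fun k => mvar K n k : MP K n) p = p.
Proof.
elim: n p => [|m IH] p; first by rewrite /= mpscaleE /= mulr1.
have polyC_hom : is_alg_hom (fun a : MP K m => (a%:P : MP K m.+1)).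
  by split=> [a b|a b||c a] /=; rewrite ?polyCD ?polyCM // !mpscaleE /= polyCM.
have coefE (k : nat) : meval (fun k => mvar K m.+1 k : MP K m.+1) p`_k = (p`_k)%:P.
  rewrite -{2}(IH p`_k) (meval_hom _ _ polyC_hom); apply: meval_ext => j lt /=.
  by rewrite (ltn_eqF lt).
rewrite (@meval_wide _ _ _ _ _ (size p)) //= eqxx.
rewrite -[RHS]coefK poly_def; apply: eq_bigr => k _.
by rewrite coefE -mul_polyC.
Qed.

Section AlgHom.
Variables (K : nzRingType) (A B : algType K) (phi : A -> B).
Hypothesis phi_hom : is_alg_hom phi.

Lemma homD a b : phi (a + b) = phi a + phi b. Proof. by case: phi_hom. Qed.
Lemma homM a b : phi (a * b) = phi a * phi b. Proof. by case: phi_hom. Qed.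
Lemma hom1 : phi 1 = 1. Proof. by case: phi_hom. Qed.
Lemma homZ c a : phi (c *: a) = c *: phi a. Proof. by case: phi_hom. Qed.
Lemma hom0 : phi 0 = 0. Proof. by apply: (addIr (phi 0)); rewrite -homD !add0r. Qed.
Lemma homB a b : phi (a - b) = phi a - phi b.
Proof. by apply: (addIr (phi b)); rewrite -homD !subrK. Qed.

Lemma hom_sum (I : Type) (r : seq I) (F : I -> A) :
  phi (\sum_(i <- r) F i) = \sum_(i <- r) phi (F i).
Proof. exact: (big_morph phi homD hom0). Qed.

Lemma hom_prod (I : Type) (r : seq I) (F : I -> A) :
  phi (\prod_(i <- r) F i) = \prod_(i <- r) phi (F i).
Proof. exact: (big_morph phi homM hom1). Qed.

End AlgHom.

Lemma inv_alg_hom (K : nzRingType) (A B : algType K) (f : A -> B) (g : B -> A) :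
  is_alg_hom f -> cancel f g -> cancel g f -> is_alg_hom g.
Proof.
move=> hf fK gK; split=> [a b|a b||c a]; apply: (can_inj fK).
- by rewrite (homD hf) !gK.
- by rewrite (homM hf) !gK.
- by rewrite gK (hom1 hf).
- by rewrite (homZ hf) !gK.
Qed.

Lemma comp_hom (K : nzRingType) (A B C : algType K) (f : A -> B) (g : B -> C) :
  is_alg_hom f -> is_alg_hom g -> is_alg_hom (fun a => g (f a)).
Proof.
move=> hf hg; split=> [a b|a b||c a];
  by rewrite ?(homD hf) ?(homD hg) ?(homM hf) ?(homM hg) ?(hom1 hf) ?(hom1 hg)
             ?(homZ hf) ?(homZ hg).
Qed.

Lemma id_hom (K : nzRingType) (A : algType K) : is_alg_hom (fun a : A => a).
Proof. by []. Qed.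

Section Endomorphisms.
Variables (K : comNzRingType) (V : algType K).

Record lin := Lin {
  lapp :> V -> V;
  lappP : {morph lapp : u v / u + v} /\ forall (c : K) u, lapp (c *: u) = c *: lapp u }.

Lemma lin_ext (f g : lin) : lapp f =1 lapp g -> f = g.
Proof.
case: f g => [f pf] [g pg] /= /funext fg; subst g.
by rewrite (Prop_irrelevance pf pg).
Qed.

HB.instance Definition _ := gen_eqMixin lin.
HB.instance Definition _ := gen_choiceMixin lin.

Lemma lappD (f : lin) u v : f (u + v) = f u + f v.
Proof. by case: f => [f [fD fZ]]. Qed.
Lemma lappZ (f : lin) (c : K) u : f (c *: u) = c *: f u.
Proof. by case: f => [f [fD fZ]]. Qed.

Definition lzero : lin :=
  @Lin (fun _ => 0) (conj (fun u v => esym (addr0 0)) (fun c u => esym (scaler0 _ c))).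
Fact ladd_subproof (f g : lin) :
  {morph (fun v => f v + g v) : u v / u + v} /\
  forall (c : K) u, f (c *: u) + g (c *: u) = c *: (f u + g u).
Proof. by split=> [u v|c u]; [rewrite !lappD addrACA|rewrite !lappZ scalerDr]. Qed.
Definition ladd (f g : lin) : lin := Lin (ladd_subproof f g).
Fact lopp_subproof (f : lin) :
  {morph (fun v => - f v) : u v / u + v} /\ forall (c : K) u, - f (c *: u) = c *: - f u.
Proof. by split=> [u v|c u]; [rewrite lappD opprD|rewrite lappZ scalerN]. Qed.
Definition lopp (f : lin) : lin := Lin (lopp_subproof f).
Definition lone : lin := @Lin id (conj (fun u v => erefl) (fun c u => erefl)).
Fact lmul_subproof (f g : lin) :
  {morph (fun v => f (g v)) : u v / u + v} /\
  forall (c : K) u, f (g (c *: u)) = c *: f (g u).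
Proof. by split=> [u v|c u]; [rewrite !lappD|rewrite !lappZ]. Qed.
Definition lmul (f g : lin) : lin := Lin (lmul_subproof f g).
Fact lscale_subproof (a : K) (f : lin) :
  {morph (fun v => a *: f v) : u v / u + v} /\
  forall (c : K) u, a *: f (c *: u) = c *: (a *: f u).
Proof. by split=> [u v|c u]; [rewrite lappD scalerDr|rewrite lappZ !scalerA mulrC]. Qed.
Definition lscale (a : K) (f : lin) : lin := Lin (lscale_subproof a f).

Fact laddA : associative ladd.
Proof. by move=> f g h; apply: lin_ext => v /=; rewrite addrA. Qed.
Fact laddC : commutative ladd.
Proof. by move=> f g; apply: lin_ext => v /=; rewrite addrC. Qed.
Fact ladd0 : left_id lzero ladd.
Proof. by move=> f; apply: lin_ext => v /=; rewrite add0r. Qed.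
Fact laddN : left_inverse lzero lopp ladd.
Proof. by move=> f; apply: lin_ext => v /=; rewrite addNr. Qed.
HB.instance Definition _ := GRing.isZmodule.Build lin laddA laddC ladd0 laddN.

Fact lmulA : associative lmul. Proof. by move=> f g h; apply: lin_ext. Qed.
Fact lmul1 : left_id lone lmul. Proof. by move=> f; apply: lin_ext. Qed.
Fact lmulr1 : right_id lone lmul. Proof. by move=> f; apply: lin_ext. Qed.
Fact lmulDl : left_distributive lmul ladd. Proof. by move=> f g h; apply: lin_ext. Qed.
Fact lmulDr : right_distributive lmul ladd.
Proof. by move=> f g h; apply: lin_ext => v /=; rewrite lappD. Qed.
Fact lone_neq0 : lone != 0.
Proof. by apply/eqP=> /(congr1 (lapp^~ 1)) /= /eqP; rewrite oner_eq0. Qed.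
HB.instance Definition _ :=
  GRing.Zmodule_isNzRing.Build lin lmulA lmul1 lmulr1 lmulDl lmulDr lone_neq0.

Fact lscaleA a b f : lscale a (lscale b f) = lscale (a * b) f.
Proof. by apply: lin_ext => v /=; rewrite scalerA. Qed.
Fact lscale1 : left_id 1 lscale.
Proof. by move=> f; apply: lin_ext => v /=; rewrite scale1r. Qed.
Fact lscaleDr : right_distributive lscale +%R.
Proof. by move=> a f g; apply: lin_ext => v /=; rewrite scalerDr. Qed.
Fact lscaleDl f : {morph lscale^~ f : a b / a + b}.
Proof. by move=> a b; apply: lin_ext => v /=; rewrite scalerDl. Qed.
HB.instance Definition _ :=
  GRing.Zmodule_isLmodule.Build K lin lscaleA lscale1 lscaleDr lscaleDl.
Fact lscaleAl (a : K) (f g : lin) : a *: (f * g) = (a *: f) * g.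
Proof. by apply: lin_ext. Qed.
HB.instance Definition _ := GRing.Lmodule_isLalgebra.Build K lin lscaleAl.
Fact lscaleAr (a : K) (f g : lin) : a *: (f * g) = f * (a *: g).
Proof. by apply: lin_ext => v /=; rewrite lappZ. Qed.
HB.instance Definition _ := GRing.Lalgebra_isAlgebra.Build K lin lscaleAr.

Lemma lin_addE (f g : lin) v : (f + g) v = f v + g v. Proof. by []. Qed.
Lemma lin_subE (f g : lin) v : (f - g) v = f v - g v. Proof. by []. Qed.
Lemma lin_mulE (f g : lin) v : (f * g) v = f (g v). Proof. by []. Qed.
Lemma lin_oneE v : (1 : lin) v = v. Proof. by []. Qed.
Lemma lin_zeroE v : (0 : lin) v = 0. Proof. by []. Qed.
Lemma lin_sumE (I : Type) (r : seq I) (F : I -> lin) v :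
  (\sum_(i <- r) F i) v = \sum_(i <- r) F i v.
Proof. exact: (big_morph (fun f : lin => f v) (fun f g => lin_addE f g v) (lin_zeroE v)). Qed.

Fact lmulr_subproof (a : V) :
  {morph ( *%R a) : u v / u + v} /\ forall (c : K) u, a * (c *: u) = c *: (a * u).
Proof. by split=> [u v|c u]; [rewrite mulrDr|rewrite scalerAr]. Qed.
Definition Mul (a : V) : lin := Lin (lmulr_subproof a).

Lemma Mul_hom : is_alg_hom Mul.
Proof.
split=> [u v|u v||c u]; apply: lin_ext => w /=.
- by rewrite mulrDl.
- by rewrite mulrA.
- by rewrite mul1r.
- by rewrite scalerAl.
Qed.

End Endomorphisms.

Definition alg_closed (K : nzRingType) (A : algType K) (S : A -> Prop) : Prop :=
  [/\ S 1, (forall a b, S a -> S b -> S (a + b)),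
      (forall a b, S a -> S b -> S (a * b)) & (forall (c : K) a, S a -> S (c *: a))].

Section Subalgebra.
Variables (K : comNzRingType) (A : algType K) (S : A -> Prop) (hS : alg_closed S).

Definition memS : {pred A} := fun a => `[< S a >].

Fact memS_subalg_closed : GRing.subalg_closed memS.
Proof.
case: hS => S1 SD SM SZ; split; first exact/asboolP.
- by move=> c a b /asboolP Sa /asboolP Sb; apply/asboolP/SD/Sb/SZ.
- by move=> a b /asboolP Sa /asboolP Sb; apply/asboolP/SM.
Qed.
HB.instance Definition _ := GRing.isSubalgClosed.Build K A memS memS_subalg_closed.

(* the subalgebra; the closure proof is an argument so that its structure
   can be inferred *)
Definition subalg (_ : alg_closed S) : Type := {a : A | memS a}.
HB.instance Definition _ := [isSub of subalg hS for (@sval A memS)].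
HB.instance Definition _ := [Choice of subalg hS by <:].
HB.instance Definition _ := [SubChoice_isSubAlgebra of subalg hS by <:].

Definition insubalg (a : A) (Sa : S a) : subalg hS :=
  exist _ a (introT (asboolP _) Sa).

Lemma subalg_valP (u : subalg hS) : S (val u). Proof. exact/asboolP/(valP u). Qed.
Lemma subalg_val_hom : is_alg_hom (val : subalg hS -> A).
Proof. by split=> // u v; rewrite rmorphM. Qed.

End Subalgebra.

Section PolynomialRepresentation.
Variables (K : comNzRingType) (n : nat).

Definition xmul (i : 'I_n) : lin (MP K n) := Mul (mvar K n i : MP K n).

Fact xdiv_subproof (i : 'I_n) :
  {morph (fun v : MP K n => mdivX i v : MP K n) : u v / u + v} /\
  forall (c : K) (u : MP K n), (mdivX i (c *: u) : MP K n) = c *: (mdivX i u : MP K n).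
Proof. by split=> [u v|c u]; [exact: mdivXD|exact: mdivX_const]. Qed.
Definition xdiv (i : 'I_n) : lin (MP K n) := Lin (xdiv_subproof i).

Lemma polyrep_jacobson : jacobson_rel xmul xdiv.
Proof.
split=> [i|i j ne]; first by apply: lin_ext => v /=; rewrite mdivX_var_eq.
split; apply: lin_ext => v /=.
- by rewrite mdivX_var_neq.
- by rewrite mulrCA.
- exact: mdivX_comm.
Qed.

End PolynomialRepresentation.

Lemma prod_perm_comm (R : nzRingType) (I : eqType) (F : I -> R) (s s' : seq I) :
  (forall i j, F i * F j = F j * F i) -> perm_eq s s' ->
  \prod_(i <- s) F i = \prod_(i <- s') F i.
Proof.
move=> FC; elim: s s' => [|a s IH] s' ss'; first by case: s' ss' => // b s' /perm_size.
have as' : a \in s' by rewrite -(perm_mem ss') mem_head.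
have rem_a t : a \in t -> \prod_(i <- t) F i = F a * \prod_(i <- rem a t) F i.
  elim: t => [//|b t IHt]; rewrite inE => /orP[/eqP <-|a_t]; rewrite big_cons /=.
    by rewrite eqxx.
  case: (eqVneq b a) => [->//|_].
  by rewrite big_cons IHt // mulrA FC -mulrA.
rewrite (rem_a _ as') big_cons (IH (rem a s')) //.
by rewrite -(perm_cons a) (perm_trans ss') // perm_to_rem.
Qed.

Lemma perm_count_le (T : eqType) (s t : seq T) :
  (forall j, count_mem j t <= count_mem j s)%N -> (size s <= size t)%N -> perm_eq t s.
Proof.
move=> cnt_le size_le; have [t' sub_t' perm_t] := (count_subseqP t s).1 cnt_le.
have size_t' : size t' = size s.
  by apply/eqP; rewrite eqn_leq (size_subseq sub_t') -(perm_size perm_t) size_le.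
have [_] := size_subseq_leqif sub_t'; rewrite size_t' eqxx => /esym/eqP eq_t'.
by rewrite -eq_t'.
Qed.

Lemma addr_rearrange (V : zmodType) (a b c d f g h : V) :
  a + (b + c) + ((d + (f - g)) + h) = a + (b + d) + (c + f) + (h - g).
Proof. by rewrite -!addrA; do 2 congr (_ + _); rewrite addrCA [- g + h]addrC. Qed.

Lemma sub_rearrange (V : zmodType) (u v w z : V) : (u - v) - (w - z) = - v + z + u - w.
Proof. by rewrite opprB [u - v]addrC -!addrA; congr (_ + _); exact: addrCA. Qed.

Section JacobsonAlgebra.
Variables (K : idomainType) (n : nat) (A : algType K) (x y : 'I_n -> A).
Hypothesis hA : is_Sn x y.

Lemma yx i : y i * x i = 1. Proof. by case: hA => -[]. Qed.
Lemma xy_comm i j : i != j -> x i * y j = y j * x i.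
Proof. by case: hA => -[_ C] _ /C []. Qed.
Lemma xx_comm i j : x i * x j = x j * x i.
Proof. by case: (eqVneq i j) => [->//|]; case: hA => -[_ C] _ /C []. Qed.
Lemma yy_comm i j : y i * y j = y j * y i.
Proof. by case: (eqVneq i j) => [->//|]; case: hA => -[_ C] _ /C []. Qed.

Lemma Sn_lift (B : algType K) (xb yb : 'I_n -> B) : jacobson_rel xb yb ->
  {f : A -> B | is_alg_hom f /\ forall i, f (x i) = xb i /\ f (y i) = yb i}.
Proof. by move=> rel; apply: cid; case: hA => _ /(_ B xb yb rel) []. Qed.

Lemma Sn_hom_eq (B : algType K) (f g : A -> B) : is_alg_hom f -> is_alg_hom g ->
  (forall i, f (x i) = g (x i) /\ f (y i) = g (y i)) -> forall a, f a = g a.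
Proof.
move=> hf hg fg; have rel : jacobson_rel (fun i => f (x i)) (fun i => f (y i)).
  split=> [i|i j ne]; first by rewrite -(homM hf) yx (hom1 hf).
  by split; rewrite -!(homM hf); [rewrite xy_comm|rewrite xx_comm|rewrite yy_comm].
by case: hA => _ /(_ B _ _ rel) [_]; apply.
Qed.

Lemma Sn_ind (S : A -> Prop) : alg_closed S ->
  (forall i, S (x i)) -> (forall i, S (y i)) -> forall a, S a.
Proof.
move=> hS Sx Sy a; pose xs i := insubalg hS (Sx i); pose ys i := insubalg hS (Sy i).
have rel : jacobson_rel xs ys.
  split=> [i|i j ne]; first by apply: val_inj; rewrite rmorphM /= yx.
  by split; apply: val_inj; rewrite !rmorphM /=; [apply: xy_comm|apply: xx_comm|apply: yy_comm].
have [f [hf fxy]] := Sn_lift rel.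
have := Sn_hom_eq (comp_hom hf (subalg_val_hom hS)) (id_hom A) _ a.
move=> /(_ _) <-; first exact: subalg_valP.
by move=> i; case: (fxy i) => -> ->.
Qed.

Definition P (a : mpoly K n) : A := meval (ext x) a.

Lemma ext_x (i : 'I_n) : ext x i = x i. Proof. by rewrite /ext valK. Qed.

Lemma ext_lt k (hk : (k < n)%N) : ext x k = x (Ordinal hk).
Proof. by rewrite -ext_x. Qed.

Lemma PD a b : P (a + b) = P a + P b. Proof. exact: mevalD. Qed.
Lemma PB a b : P (a - b) = P a - P b. Proof. exact: mevalB. Qed.
Lemma P0 : P 0 = 0. Proof. exact: meval0. Qed.
Lemma P1 : P 1 = 1. Proof. exact: meval1. Qed.
Lemma Pconst c : P (mconst n c) = c%:A. Proof. exact: meval_const. Qed.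
Lemma Pvar (i : 'I_n) : P (mvar K n i) = x i. Proof. by rewrite /P meval_var ?ext_x. Qed.
Lemma PM a b : P (a * b) = P a * P b.
Proof. by apply: mevalM => i j hi hj; rewrite !ext_lt xx_comm. Qed.

Lemma P_sum (I : Type) (r : seq I) (F : I -> mpoly K n) :
  P (\sum_(i <- r) F i) = \sum_(i <- r) P (F i).
Proof. exact: (big_morph P PD P0). Qed.

Lemma P_hom_fix (g : A -> A) a : is_alg_hom g -> (forall i, g (x i) = x i) -> g (P a) = P a.
Proof.
move=> hg gx; rewrite /P (meval_hom _ _ hg); apply: meval_ext => k hk /=.
by rewrite ext_lt gx.
Qed.

Lemma P_msubst0_comm (z : A) (i : 'I_n) a : (forall j, j != i -> z * x j = x j * z) ->
  z * P (msubst0 i a) = P (msubst0 i a) * z.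
Proof.
move=> zx; rewrite /P meval_msubst0; apply: meval_comm => k hk.
case: ifP => [_|/negbT ki]; first by rewrite mul0r mulr0.
by rewrite ext_lt zx //; apply: contra ki => /eqP <-.
Qed.

Lemma x_P i a : x i * P a = P a * x i.
Proof. by apply: meval_comm => k hk; rewrite ext_lt xx_comm. Qed.

Lemma P_split (i : 'I_n) a : P a = P (msubst0 i a) + x i * P (mdivX i a).
Proof. by rewrite -{1}(mpoly_split i a) PD PM Pvar. Qed.

Lemma y_P i a : y i * P a = P (msubst0 i a) * y i + P (mdivX i a).
Proof.
rewrite {1}(P_split i a) mulrDr mulrA yx mul1r P_msubst0_comm //.
by move=> j ji; rewrite xy_comm // eq_sym.
Qed.

Definition e (i : 'I_n) : A := locked (1 - x i * y i).
Lemma eE i : e i = 1 - x i * y i. Proof. by rewrite /e -lock. Qed.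

Lemma xy_e i : x i * y i = 1 - e i. Proof. by rewrite eE opprB addrC subrK. Qed.
Lemma e_x i : e i * x i = 0.
Proof. by rewrite eE mulrBl mul1r -mulrA yx mulr1 subrr. Qed.
Lemma y_e i : y i * e i = 0.
Proof. by rewrite eE mulrBr mulr1 mulrA yx mul1r subrr. Qed.
Lemma e_idem i : e i * e i = e i.
Proof. by rewrite {1}eE mulrBl mul1r -mulrA y_e mulr0 subr0. Qed.
Lemma e_x_comm i j : i != j -> e i * x j = x j * e i.
Proof.
move=> ne; rewrite eE mulrBl mulrBr mul1r mulr1 -mulrA -xy_comm 1?eq_sym //.
by rewrite !mulrA xx_comm.
Qed.
Lemma e_y_comm i j : i != j -> e i * y j = y j * e i.
Proof. by move=> ne; rewrite eE mulrBl mulrBr mul1r mulr1 mulrA -xy_comm // -!mulrA yy_comm. Qed.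
Lemma e_comm i j : e i * e j = e j * e i.
Proof.
case: (eqVneq i j) => [->//|ne].
by rewrite [e j]eE mulrBr mulr1 mulrA e_x_comm // -mulrA e_y_comm // mulrA mulrBl mul1r.
Qed.

Lemma e_P i a : e i * P a = P (msubst0 i a) * e i.
Proof.
rewrite {1}(P_split i a) mulrDr mulrA e_x mul0r addr0.
by apply: P_msubst0_comm => j ji; rewrite e_x_comm // eq_sym.
Qed.

Definition rho : A -> lin (MP K n) := sval (Sn_lift (polyrep_jacobson K n)).
Lemma rho_hom : is_alg_hom rho. Proof. exact: (svalP (Sn_lift _)).1. Qed.
Lemma rho_x i : rho (x i) = xmul K i. Proof. exact: ((svalP (Sn_lift _)).2 i).1. Qed.
Lemma rho_y i : rho (y i) = xdiv K i. Proof. exact: ((svalP (Sn_lift _)).2 i).2. Qed.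

Lemma rho_P a v : rho (P a) v = (a : MP K n) * v.
Proof.
rewrite /P (meval_hom _ _ rho_hom) (@meval_ext _ _ _ (fun k => Mul (mvar K n k : MP K n))).
  by rewrite -(meval_hom _ _ (@Mul_hom K (MP K n))) meval_vars.
by move=> k hk /=; rewrite ext_lt rho_x.
Qed.

Lemma rho_e i v : rho (e i) v = msubst0 i v.
Proof.
rewrite eE (homB rho_hom) (hom1 rho_hom) (homM rho_hom) rho_x rho_y /=.
by rewrite -{1}(mpoly_split i v) addrK.
Qed.

Lemma P_e_eq0 r i : P r * e i = 0 -> r = 0.
Proof.
move/(congr1 (fun a => rho a 1)); rewrite (homM rho_hom) (hom0 rho_hom) /=.
by rewrite rho_e rho_P msubst0_1 mulr1.
Qed.

Lemma P_ee_eq0 r i j : P r * (e i * e j) = 0 -> r = 0.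
Proof.
move/(congr1 (fun a => rho a 1)); rewrite !(homM rho_hom) (hom0 rho_hom) /=.
by rewrite !rho_e rho_P !msubst0_1 mulr1.
Qed.

Definition ymon (s : seq 'I_n) : A := \prod_(i <- s) y i.

Definition normal_form (a : A) : Prop :=
  exists L : seq (mpoly K n * seq 'I_n), a = \sum_(t <- L) P t.1 * ymon t.2.

Lemma nf_add a b : normal_form a -> normal_form b -> normal_form (a + b).
Proof. by move=> [L ->] [L' ->]; exists (L ++ L'); rewrite big_cat. Qed.

Lemma nf_Pmul c a : normal_form a -> normal_form (P c * a).
Proof.
move=> [L ->]; exists [seq (c * t.1, t.2) | t <- L].
by rewrite big_map mulr_sumr; apply: eq_bigr => t _; rewrite /= PM mulrA.
Qed.

Lemma nf_ymul i a : normal_form a -> normal_form (y i * a).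
Proof.
move=> [L ->].
exists (flatten [seq [:: (msubst0 i t.1, i :: t.2); (mdivX i t.1, t.2)] | t <- L]).
rewrite big_flatten big_map mulr_sumr; apply: eq_bigr => t _.
by rewrite !big_cons big_nil /= addr0 mulrA y_P mulrDl /ymon big_cons mulrA.
Qed.

Lemma nf_mul a b : normal_form a -> normal_form b -> normal_form (a * b).
Proof.
move=> [L ->] nfb; rewrite mulr_suml.
elim: L => [|t L IH]; first by exists [::]; rewrite !big_nil.
rewrite big_cons; apply: nf_add => //; rewrite -mulrA; apply: nf_Pmul.
elim: t.2 => [|i s IHs]; rewrite /ymon ?big_nil ?mul1r // big_cons -mulrA.
exact: nf_ymul.
Qed.

Lemma nf_1 : normal_form 1.
Proof. by exists [:: (1, [::])]; rewrite big_seq1 P1 /ymon big_nil mulr1. Qed.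

Lemma normal_form_all a : normal_form a.
Proof.
apply: Sn_ind; first split.
- exact: nf_1.
- exact: nf_add.
- exact: nf_mul.
- by move=> c b nfb; rewrite -mulr_algl -Pconst; apply: nf_Pmul.
- by move=> i; rewrite -(mulr1 (x i)) -Pvar; apply/nf_Pmul/nf_1.
- by move=> i; rewrite -(mulr1 (y i)); apply/nf_ymul/nf_1.
Qed.

Lemma ymon_perm s s' : perm_eq s s' -> ymon s = ymon s'.
Proof. exact/prod_perm_comm/yy_comm. Qed.

Lemma rho_ymon_monomial s (c : 'I_n -> nat) :
  rho (ymon s) (monomial K c) =
  if [forall j, count_mem j s <= c j]%N
  then monomial K (fun j => c j - count_mem j s)%N else 0.
Proof.
elim: s => [|i s IH].
  rewrite /ymon big_nil (hom1 rho_hom) /=.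
  have -> : [forall j, count_mem j [::] <= c j]%N by apply/forallP.
  by apply: monomial_ext => j; rewrite subn0.
rewrite /ymon big_cons (homM rho_hom) lin_mulE -/(ymon s) IH rho_y /=.
case: ifP => [/forallP le_s|/negbT le_s]; last first.
  rewrite mdivX0; case: forallP => // le_is; case/forallP: le_s => j.
  by apply: leq_trans (le_is j); rewrite leq_addl.
rewrite mdivX_monomial; case: ifP => [lt|/negbT lt].
  have -> : [forall j, count_mem j (i :: s) <= c j]%N.
    apply/forallP=> j /=; case: (eqVneq i j) => [<-|ij]; last by rewrite add0n le_s.
    by rewrite add1n -subn_gt0.
  apply: monomial_ext => j; rewrite /decr_at /=.
  by case: (eqVneq j i) => [->|ji]; rewrite ?eqxx ?add1n ?subnS // eq_sym (negbTE ji).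
case: forallP => // /(_ i); rewrite /= eqxx add1n.
by rewrite -subn_gt0 (negbTE lt).
Qed.

Lemma rho_ymon_min s s0 : (size s0 <= size s)%N ->
  rho (ymon s) (monomial K (fun j => count_mem j s0)) = if perm_eq s s0 then 1 else 0.
Proof.
move=> size_le; rewrite rho_ymon_monomial.
case: (boolP (perm_eq s s0)) => [s_s0|not_s_s0].
  have -> : [forall j, count_mem j s <= count_mem j s0]%N.
    by apply/forallP=> j; rewrite (permP s_s0).
  by rewrite -[RHS](monomial0 K n); apply: monomial_ext => j; rewrite (permP s_s0) subnn.
by case: forallP => // /perm_count_le/(_ size_le); rewrite (negbTE not_s_s0).
Qed.

Lemma P_sum_ymon (L : seq (mpoly K n * seq 'I_n)) s0 :
  (forall t, t \in L -> perm_eq t.2 s0) ->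
  \sum_(t <- L) P t.1 * ymon t.2 = P (\sum_(t <- L) t.1) * ymon s0.
Proof.
move=> perm_L; rewrite P_sum mulr_suml; apply: eq_big_seq => t tL.
by rewrite (ymon_perm (perm_L t tL)).
Qed.

(* Faithfulness: the terms whose y-part has minimal size are detected by rho
   on a monomial, so they cancel; induction on the number of terms. *)
Lemma rho_faithful (L : seq (mpoly K n * seq 'I_n)) :
  rho (\sum_(t <- L) P t.1 * ymon t.2) = 0 -> \sum_(t <- L) P t.1 * ymon t.2 = 0.
Proof.
have [N] := ubnP (size L); elim: N L => // N IH L size_L rho0.
case: (eqVneq L [::]) => [->|nL]; first by rewrite big_nil.
have exk : exists k, has (fun t => size t.2 == k) L.
  by case: L nL {size_L rho0} => // t0 L' _; exists (size t0.2); rewrite /= eqxx.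
case: (ex_minnP exk) => k /hasP[t1 t1L /eqP size_t1] k_min.
pose q (t : mpoly K n * seq 'I_n) := perm_eq t.2 t1.2.
have class0 : \sum_(t <- L | q t) (t.1 : MP K n) = 0.
  have := congr1 (fun f : lin (MP K n) => f (monomial K (fun j => count_mem j t1.2))) rho0.
  rewrite (hom_sum rho_hom) lin_sumE lin_zeroE => rho0_at.
  rewrite -[RHS]rho0_at big_mkcond; apply: eq_big_seq => t tL.
  rewrite (homM rho_hom) lin_mulE rho_P rho_ymon_min.
    by rewrite /q; case: ifP; rewrite ?mulr1 ?mulr0.
  by rewrite size_t1 k_min //; apply/hasP; exists t.
have q_part : \sum_(t <- L | q t) P t.1 * ymon t.2 = 0.
  rewrite -big_filter (P_sum_ymon (s0 := t1.2)) ?big_filter; last first.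
    by move=> t; rewrite mem_filter => /andP[].
  have -> : \sum_(t <- L | q t) t.1 = 0 := class0.
  by rewrite P0 mul0r.
have split_L :
    \sum_(t <- L) P t.1 * ymon t.2 = \sum_(t <- filter (predC q) L) P t.1 * ymon t.2.
  by rewrite (bigID q) /= q_part add0r big_filter.
rewrite split_L; apply: IH; last by rewrite -split_L.
have q_t1 : (0 < count q L)%N by rewrite -has_count; apply/hasP; exists t1 => //; exact: perm_refl.
move: size_L; rewrite size_filter -(count_predC q L) ltnS => /(leq_trans _); apply.
by rewrite addnC -addn1 leq_add2l.
Qed.

Lemma rho_inj a : rho a = 0 -> a = 0.
Proof. by have [L ->] := normal_form_all a; exact: rho_faithful. Qed.

Definition E : A := \prod_(i < n) e i.

Lemma e_E i : e i * E = E.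
Proof.
rewrite /E; elim: (index_enum _) (mem_index_enum i) => [//|j r IH].
rewrite inE big_cons => /orP[/eqP <-|ir]; first by rewrite mulrA e_idem.
by rewrite mulrA e_comm -mulrA IH.
Qed.

Lemma mcoef0_rho_prod (r : seq 'I_n) (F : 'I_n -> A) u :
  (forall j v, mcoef0 (rho (F j) v) = mcoef0 v) ->
  mcoef0 (rho (\prod_(j <- r) F j) u) = mcoef0 u.
Proof.
move=> F0; elim: r => [|a r IH]; first by rewrite big_nil (hom1 rho_hom).
by rewrite big_cons (homM rho_hom) lin_mulE F0 IH.
Qed.

Lemma rho_E u : rho E u = mconst n (mcoef0 u).
Proof.
have -> : mcoef0 u = mcoef0 (rho E u).
  by rewrite mcoef0_rho_prod // => j v; rewrite rho_e mcoef0_msubst0.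
apply: msubst0_fixed_const => j hj.
by rewrite -[in RHS](e_E (Ordinal hj)) (homM rho_hom) lin_mulE rho_e.
Qed.

Lemma mul_P_E a (v : mpoly K n) : a * P v * E = P (rho a v) * E.
Proof.
apply/eqP; rewrite -subr_eq0; apply/eqP/rho_inj.
rewrite (homB rho_hom) !(homM rho_hom); apply: lin_ext => u.
rewrite lin_subE !lin_mulE rho_E !rho_P lin_zeroE mulrC -mpscaleE lappZ.
by rewrite mpscaleE mulrC subrr.
Qed.

Lemma right_ann_x (b : A) (i : 'I_n) :
  b * x i = 0 -> (forall j, j != i -> b * x j = x j * b) -> b = P (rho b 1) * e i.
Proof.
move=> bx bxj; have rho_b v : rho b v = msubst0 i v * rho b 1.
  have bxv : rho b (mvar K n i * mdivX i v : MP K n) = 0.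
    have := congr1 (fun f : lin (MP K n) => f (mdivX i v)) (congr1 rho bx).
    by rewrite (homM rho_hom) rho_x (hom0 rho_hom).
  have := congr1 (fun f : lin (MP K n) => f 1) (congr1 rho (P_msubst0_comm v bxj)).
  rewrite !(homM rho_hom) /= !rho_P mulr1 => <-.
  by rewrite -{1}(mpoly_split i v) lappD bxv addr0.
apply/eqP; rewrite -subr_eq0; apply/eqP/rho_inj.
rewrite (homB rho_hom) (homM rho_hom); apply: lin_ext => v.
by rewrite lin_subE lin_mulE rho_e rho_P lin_zeroE rho_b mulrC subrr.
Qed.

Definition adm_expr (i j : 'I_n) (a b : mpoly K n) : mpoly K n :=
  - mdivX j (a - msubst0 j a) + mdivX i (b - msubst0 i b)
  + a * msubst0 i b - b * msubst0 j a.

Lemma admissibleP (p : 'I_n -> mpoly K n) :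
  admissible p <-> forall i j, i != j -> adm_expr i j (p i) (p j) = 0.
Proof. by []. Qed.

Lemma perturbed_mul (i j : 'I_n) a b : i != j ->
  (y i + P a * e i) * (y j + P b * e j) =
  y i * y j + (P (msubst0 i b) * y i * e j + P (msubst0 j a) * y j * e i)
  + (P (mdivX i b) * e j + P (mdivX j a) * e i)
  + P (a * msubst0 i b - mdivX j a) * (e i * e j).
Proof.
move=> ne.
have t2 : y i * (P b * e j) = P (msubst0 i b) * y i * e j + P (mdivX i b) * e j.
  by rewrite mulrA y_P mulrDl.
have t3 : P a * e i * y j =
    P (msubst0 j a) * y j * e i + (P (mdivX j a) * e i - P (mdivX j a) * (e i * e j)).
  rewrite -mulrA e_y_comm // mulrA (P_split j a) mulrDl mulrDl x_P -(mulrA _ (x j)) xy_e.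
  by rewrite mulrBr mulr1 mulrBl -[_ * e j * e i]mulrA e_comm.
have t4 : P a * e i * (P b * e j) = P (a * msubst0 i b) * (e i * e j).
  by rewrite -mulrA (mulrA (e i)) e_P PM !mulrA.
by rewrite mulrDl !mulrDr t2 t3 t4 addr_rearrange PB mulrBl.
Qed.

Lemma perturbed_commutator (i j : 'I_n) a b : i != j ->
  (y i + P a * e i) * (y j + P b * e j) - (y j + P b * e j) * (y i + P a * e i) =
  P (adm_expr i j a b) * (e i * e j).
Proof.
move=> ne; rewrite perturbed_mul // perturbed_mul 1?eq_sym // yy_comm e_comm.
rewrite [_ * y i * e j + _]addrC [P (mdivX i b) * e j + _]addrC.
rewrite opprD addrACA subrr add0r -mulrBl -PB.
congr (P _ * _); rewrite /adm_expr !mdivXB !mdivX_msubst0 // !subr0.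
exact: sub_rearrange.
Qed.

Section Stabiliser.
Variable g : A -> A.
Hypotheses (g_hom : is_alg_hom g) (g_x : forall i, g (x i) = x i).

Lemma stab_inj : injective g.
Proof.
move=> a b gab; apply/eqP; rewrite -subr_eq0; apply/eqP.
set c := a - b; have gc : g c = 0 by rewrite /c (homB g_hom) gab subrr.
apply: rho_inj; apply: lin_ext => v; rewrite lin_zeroE.
set w := rho c v.
have wgE : P w * g E = 0.
  by rewrite -(P_hom_fix w g_hom g_x) -(homM g_hom) -mul_P_E !(homM g_hom) gc !mul0r.
have gE_const : mcoef0 (rho (g E) 1) = 1.
  rewrite /E (hom_prod g_hom) mcoef0_rho_prod -?(mconst1 K n) ?mcoef0_const //.
  move=> j u; rewrite eE (homB g_hom) (hom1 g_hom) (homM g_hom) g_x.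
  rewrite (homB rho_hom) (hom1 rho_hom) (homM rho_hom) rho_x.
  by rewrite lin_subE lin_oneE lin_mulE mcoef0B mcoef0_varM // subr0.
have := congr1 (fun f : lin (MP K n) => f 1) (congr1 rho wgE).
rewrite (homM rho_hom) (hom0 rho_hom) lin_mulE rho_P lin_zeroE.
case/mpoly_mul_eq0 => // gE0; move: gE_const; rewrite gE0 -(mconst0 K n) mcoef0_const.
by move/eqP; rewrite eq_sym oner_eq0.
Qed.

Definition stab_poly (i : 'I_n) : mpoly K n := rho (g (y i) - y i) 1.

Lemma stab_y i : g (y i) = y i + P (stab_poly i) * e i.
Proof.
set b := g (y i) - y i; suff -> : P (stab_poly i) * e i = b by rewrite /b addrC subrK.
apply/esym/right_ann_x.
  by rewrite /b mulrBl -{1}(g_x i) -(homM g_hom) !yx (hom1 g_hom) subrr.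
move=> j ji; rewrite /b mulrBl mulrBr -{1}(g_x j) -(homM g_hom) -xy_comm //.
by rewrite (homM g_hom) g_x xy_comm.
Qed.

Lemma stab_perturbed i q :
  g (y i + P q * e i) =
  y i + P (stab_poly i + q - mvar K n i * stab_poly i * q) * e i.
Proof.
have g_e : g (e i) = e i - x i * P (stab_poly i) * e i.
  rewrite !eE (homB g_hom) (hom1 g_hom) (homM g_hom) g_x stab_y.
  by rewrite mulrDr opprD addrA -!eE mulrA.
rewrite (homD g_hom) (homM g_hom) P_hom_fix // stab_y g_e mulrBr -addrA.
congr (_ + _); rewrite addrA PB PD !PM Pvar mulrBl mulrDl; congr (_ - _).
rewrite !mulrA -x_P; congr (_ * e i); rewrite -!mulrA; congr (_ * _).
by rewrite -!PM mulrC.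
Qed.

(* the p_i are admissible: [g(y_i), g(y_j)] = 0 *)
Lemma stab_admissible : admissible stab_poly.
Proof.
move=> i j ne; apply: (@P_ee_eq0 _ i j).
by rewrite -perturbed_commutator // -!stab_y -!(homM g_hom) yy_comm subrr.
Qed.

End Stabiliser.

Lemma stab_comm (g h : A -> A) :
  is_alg_hom g -> (forall i, g (x i) = x i) ->
  is_alg_hom h -> (forall i, h (x i) = x i) -> forall a, g (h a) = h (g a).
Proof.
move=> g_hom g_x h_hom h_x; apply: Sn_hom_eq; try exact: comp_hom.
move=> i; split; first by rewrite h_x g_x h_x.
rewrite (stab_y h_hom h_x) (stab_y g_hom g_x).
rewrite (stab_perturbed g_hom g_x) (stab_perturbed h_hom h_x).
by congr (_ + P _ * _); ring.
Qed.

Lemma stab_bijective_id (g : A -> A) :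
  is_alg_hom g -> (forall i, g (x i) = x i) -> bijective g -> forall a, g a = a.
Proof.
move=> g_hom g_x [h gK hK]; have h_hom := inv_alg_hom g_hom gK hK.
have h_x i : h (x i) = x i by rewrite -{1}(g_x i) gK.
apply: (Sn_hom_eq g_hom (id_hom A)) => i; split=> //.
set p := stab_poly g i; set q := stab_poly h i.
have pq0 : p + q - mvar K n i * p * q = 0.
  have := hK (y i); rewrite (stab_y h_hom h_x) (stab_perturbed g_hom g_x).
  by move/(canRL (addKr _)); rewrite addNr; exact: P_e_eq0.
have unit_pq : (1 - mvar K n i * p) * (1 - mvar K n i * q) = 1.
  have -> : (1 - mvar K n i * p) * (1 - mvar K n i * q) =
            1 - mvar K n i * (p + q - mvar K n i * p * q) by ring.
  by rewrite pq0 mulr0 subr0.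
have P_p0 : P p = 0.
  by rewrite -(mul1r (P p)) -(yx i) -mulrA -Pvar -PM (mpoly_unit_1subX unit_pq) P0 mulr0.
by rewrite (stab_y g_hom g_x) -/p P_p0 mul0r addr0.
Qed.

Lemma perturbed_jacobson (p : 'I_n -> mpoly K n) : admissible p ->
  jacobson_rel x (fun i => y i + P (p i) * e i).
Proof.
move=> p_adm; split=> [i|i j ne].
  by rewrite mulrDl yx -mulrA e_x mulr0 addr0.
split.
- by rewrite mulrDr mulrDl xy_comm // mulrA x_P -!mulrA e_x_comm // eq_sym.
- exact: xx_comm.
- apply/eqP; rewrite -subr_eq0 perturbed_commutator //.
  by rewrite ((admissibleP p).1 p_adm i j ne) P0 mul0r.
Qed.

End JacobsonAlgebra.

Theorem corollary10p1 (K : fieldType) (hK : [pchar K] =i pred0) (n : nat)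
  (A : algType K) (x y : 'I_n -> A) (hA : is_Sn x y) :
  let st := fun g : A -> A => is_alg_hom g /\ (forall i, g (x i) = x i) in
  let sigma := fun (p : 'I_n -> mpoly K n) (g : A -> A) =>
    st g /\ (forall i, g (y i) = y i + meval (ext x) (p i) * (1 - x i * y i)) in
  [/\ (forall g h, st g -> st h -> forall a, g (h a) = h (g a)),
      (forall g, st g -> ~ (forall a, g a = a) -> injective g /\ ~ bijective g),
      (forall g, st g -> exists2 p, admissible p & sigma p g) &
      (forall p, admissible p -> exists g, sigma p g)].
Proof.
move=> st sigma; subst st sigma; split.
- by move=> g h [g_hom g_x] [h_hom h_x]; exact: (stab_comm hA).
- move=> g [g_hom g_x] g_not_id; split; first exact: (stab_inj hA g_hom g_x).
  by move/(stab_bijective_id hA g_hom g_x).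
- move=> g [g_hom g_x]; exists (stab_poly hA g); first exact: (stab_admissible hA).
  by split=> // i; rewrite (stab_y hA g_hom g_x) -eE.
- move=> p p_adm; have [g [g_hom g_xy]] := Sn_lift hA (perturbed_jacobson hA p_adm).
  exists g; split; first by split=> // i; case: (g_xy i).
  by move=> i; case: (g_xy i) => _ ->; rewrite eE.
Qed.
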